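(* Let $\alpha\in\{\frac13,\frac12\}$. For any two BISO channels $W_1:X\mapsto Y_1$ and $W_2:X\mapsto Y_2$ with the same $\alpha$-capacity, $W_1$ is $\alpha$-more capable than $W_2$ and $W_2$ is $\alpha$-more capable than $W_1$.
   Context: A binary input symmetric output (BISO) channel has input alphabet $\{0,1\}$ and a finite output alphabet $\{0,\pm1,\dots,\pm l\}$ with $P_{Y|X}(y|0)=P_{Y|X}(-y|1)$ for all $y$. Sibson's Rényi mutual information of an input distribution $P_X$ on $\{0,1\}$ and channel $P_{Y|X}$ is $I^S_\alpha(X:Y)=\frac{\alpha}{\alpha-1}\log\sum_y\big(\sum_x P_X(x)P_{Y|X}(y|x)^\alpha\big)^{1/\alpha}$; the $\alpha$-capacity is $C_\alpha(P_{Y|X})=\sup_{P_X}I^S_\alpha(X:Y)$. A channel $W_1:X\mapsto Y_1$ is $\alpha$-more capable than $W_2:X\mapsto Y_2$ if $I^S_\alpha(X:Y_1)\ge I^S_\alpha(X:Y_2)$ for every input distribution $P_X$. *)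

From HB Require Import structures.
From mathcomp Require Import all_boot all_order all_algebra.
From mathcomp Require Import all_classical all_reals all_analysis.

Set Implicit Arguments.
Unset Strict Implicit.
Unset Printing Implicit Defensive.

Import Order.TTheory GRing.Theory Num.Theory.
Local Open Scope classical_set_scope.
Local Open Scope ring_scope.

(* Output alphabet {0, +-1, ..., +-l} encoded as 'I_(2l+1): index i stands for
   the symbol i - l.  Negation y |-> -y is i |-> 2l - i. *)
Definition out_neg (l : nat) (i : 'I_(l.*2.+1)) : 'I_(l.*2.+1) := rev_ord i.

(* Input alphabet {0,1} encoded as bool (false = 0, true = 1).
   A channel is a transition matrix W x y = P_{Y|X}(y|x). *)
Definition is_channel (R : realType) (l : nat)
    (W : bool -> 'I_(l.*2.+1) -> R) : Prop :=
  (forall x y, 0 <= W x y) /\ (forall x, \sum_(y < l.*2.+1) W x y = 1).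

Definition BISO (R : realType) (l : nat) (W : bool -> 'I_(l.*2.+1) -> R) : Prop :=
  is_channel W /\ (forall y, W false y = W true (out_neg y)).

Definition is_input_dist (R : realType) (P : bool -> R) : Prop :=
  (forall x, 0 <= P x) /\ P false + P true = 1.

Definition sibsonI (R : realType) (alpha : R) (l : nat) (P : bool -> R)
    (W : bool -> 'I_(l.*2.+1) -> R) : R :=
  alpha / (alpha - 1) *
    ln (\sum_(y < l.*2.+1)
          (\sum_(x : bool) P x * powR (W x y) alpha) `^ (alpha^-1)).

Definition alpha_capacity (R : realType) (alpha : R) (l : nat)
    (W : bool -> 'I_(l.*2.+1) -> R) : R :=
  sup [set v : R | exists P : bool -> R, is_input_dist P /\ v = sibsonI alpha P W].

Definition more_capable (R : realType) (alpha : R) (l1 l2 : nat)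
    (W1 : bool -> 'I_(l1.*2.+1) -> R) (W2 : bool -> 'I_(l2.*2.+1) -> R) : Prop :=
  forall P : bool -> R, is_input_dist P -> sibsonI alpha P W2 <= sibsonI alpha P W1.

From mathcomp Require Import all_boot all_order all_algebra.
From mathcomp Require Import all_classical all_reals all_analysis.
From mathcomp Require Import ring lra.

(* For alpha = 1/n the inner power is an n-th power, so with a = W(0,.)^(1/n),
   b = W(1,.)^(1/n) and input (p, q), Sibson's information is
   ln (sum_y (p a + q b)^n) / (1 - n).  For n = 2 and, thanks to the output
   symmetry, for n = 3, the binomial expansion collapses to
   1 - n p q (1 - K) for a single channel constant K in [0, 1]
   (the Bhattacharyya coefficient, resp. sum_y a^2 b).  So the information at
   every input is determined by K, and the capacity, attained at the uniform
   input, is strictly decreasing in K: equal capacities force equal K. *)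

Set Implicit Arguments.
Unset Strict Implicit.
Unset Printing Implicit Defensive.
Import Order.TTheory GRing.Theory Num.Theory.
Local Open Scope ring_scope.

Section SibsonBinaryInput.
Variable R : realType.

Lemma input_dist_mul_bound (P : bool -> R) :
  is_input_dist P -> 0 <= P false * P true <= 4^-1.
Proof.
move=> [P_ge0 P_sum]; apply/andP; split; first exact: mulr_ge0.
have -> : P true = 1 - P false by lra.
have := sqr_ge0 (P false - 2^-1); nra.
Qed.

Definition sibson_profile (alpha : R) l (W : bool -> 'I_(l.*2.+1) -> R)
    (c m K : R) :=
  forall P, is_input_dist P ->
    sibsonI alpha P W = c * ln (1 - m * (P false * P true) * (1 - K)).

Section Profile.
Variables (alpha c m : R).
Hypotheses (c_lt0 : c < 0) (m_gt0 : 0 < m) (m_lt4 : m < 4).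

Let quarter_itv : 0 <= (4^-1 : R) <= 4^-1.
Proof. by rewrite invr_ge0 ler0n lexx. Qed.

Lemma profile_arg_gt0 (K t : R) :
  0 <= K <= 1 -> 0 <= t <= 4^-1 -> 0 < 1 - m * t * (1 - K).
Proof.
move=> /andP[K_ge0 K_le1] /andP[t_ge0 t_le]; rewrite subr_gt0.
have mt_le : m * t <= m * 4^-1 by rewrite (ler_pM2l m_gt0).
have mt_ge0 : 0 <= m * t by rewrite mulr_ge0 // ltW.
have : m * t * (1 - K) <= m * t by rewrite ler_piMr //; lra.
have : m * 4^-1 < 1 by rewrite ltr_pdivrMr // mul1r.
lra.
Qed.

Lemma alpha_capacity_profile l (W : bool -> 'I_(l.*2.+1) -> R) (K : R) :
  0 <= K <= 1 -> sibson_profile alpha W c m K ->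
  alpha_capacity alpha W = c * ln (1 - m * 4^-1 * (1 - K)).
Proof.
move=> K01 WK.
rewrite /alpha_capacity; set S := (X in sup X); set cap := c * ln _.
have cap_ub : ubound S cap.
  move=> _ [P [dP ->]]; have pq_bound := input_dist_mul_bound dP.
  rewrite WK // ler_nM2l // ler_ln ?posrE ?profile_arg_gt0 //.
  case/andP: K01 => _ K_le1; case/andP: pq_bound => _ pq_le.
  by rewrite lerD2l lerN2 ler_wpM2r ?subr_ge0 // ler_pM2l.
have cap_in : S cap.
  have dU : is_input_dist (fun _ : bool => 2^-1 : R) by split => //; lra.
  by exists (fun => 2^-1); split; rewrite // WK //; congr (c * ln (1 - m * _ * _)); field.
apply/eqP; rewrite eq_le; apply/andP; split.
  by apply: ge_sup => //; exists cap.
by apply: ub_le_sup => //; exists cap.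
Qed.

Lemma profile_more_capable l1 l2 (W1 : bool -> 'I_(l1.*2.+1) -> R)
    (W2 : bool -> 'I_(l2.*2.+1) -> R) (K1 K2 : R) :
  0 <= K1 <= 1 -> 0 <= K2 <= 1 ->
  sibson_profile alpha W1 c m K1 -> sibson_profile alpha W2 c m K2 ->
  alpha_capacity alpha W1 = alpha_capacity alpha W2 ->
  more_capable alpha W1 W2 /\ more_capable alpha W2 W1.
Proof.
move=> K1_01 K2_01 W1K W2K.
rewrite (alpha_capacity_profile K1_01 W1K) (alpha_capacity_profile K2_01 W2K).
move=> /(mulfI (ltr0_neq0 c_lt0))/ln_inj.
rewrite !posrE !profile_arg_gt0 // => /(_ isT isT) arg_eq.
suff K_eq : K1 = K2 by split => P dP; rewrite W1K // W2K // K_eq.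
have mq_neq0 : m * 4^-1 != 0 by rewrite mulf_neq0 ?gt_eqF ?invr_gt0.
suff : 1 - K1 = 1 - K2 by lra.
by apply: (mulfI mq_neq0); lra.
Qed.

End Profile.

Lemma powR_invnK (w : R) n : 0 <= w -> (0 < n)%N -> (w `^ n%:R^-1) ^+ n = w.
Proof.
move=> w_ge0 n_gt0; rewrite -powR_mulrn ?powR_ge0 // -powRrM mulVf ?powRr1 //.
by rewrite pnatr_eq0 -lt0n.
Qed.

Lemma sibsonI_invn n l (P : bool -> R) (W : bool -> 'I_(l.*2.+1) -> R) :
  (1 < n)%N -> (forall x, 0 <= P x) -> (forall x y, 0 <= W x y) ->
  sibsonI n%:R^-1 P W = (1 - n%:R)^-1 *
    ln (\sum_y (P false * W false y `^ n%:R^-1 + P true * W true y `^ n%:R^-1) ^+ n).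
Proof.
move=> n_gt1 P_ge0 W_ge0; rewrite /sibsonI invrK.
congr (_ * ln _).
  have n_neq0 : n%:R != 0 :> R by rewrite pnatr_eq0 -lt0n ltnW.
  have n_neq1 : 1 - n%:R != 0 :> R.
    by rewrite subr_eq0 eq_sym pnatr_eq1 neq_ltn n_gt1 orbT.
  by field; rewrite n_neq0 n_neq1.
apply: eq_bigr => y _; rewrite big_bool /= addrC powR_mulrn //.
by rewrite addr_ge0 // mulr_ge0 ?powR_ge0.
Qed.

Lemma BISO_sum_swap l (W : bool -> 'I_(l.*2.+1) -> R) (F : R -> R -> R) :
  BISO W -> \sum_y F (W false y) (W true y) = \sum_y F (W true y) (W false y).
Proof.
move=> [_ W_sym]; rewrite (reindex_inj rev_ord_inj) /=.
by apply: eq_bigr => y _; rewrite W_sym /out_neg rev_ordK -W_sym.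
Qed.

Definition bhattacharyya l (W : bool -> 'I_(l.*2.+1) -> R) :=
  \sum_y W false y `^ 2^-1 * W true y `^ 2^-1.

Definition third_affinity l (W : bool -> 'I_(l.*2.+1) -> R) :=
  \sum_y (W false y `^ 3^-1) ^+ 2 * W true y `^ 3^-1.

Lemma mul_le_mean_sqr (a b : R) : a * b <= 2^-1 * (a ^+ 2 + b ^+ 2).
Proof. have := sqr_ge0 (a - b); nra. Qed.

Lemma sqr_mul_le_mean_cube (a b : R) :
  0 <= a -> 0 <= b -> a ^+ 2 * b <= 3^-1 * (2 * a ^+ 3 + b ^+ 3).
Proof.
move=> a_ge0 b_ge0.
have : 0 <= (a - b) ^+ 2 * (2 * a + b) by rewrite mulr_ge0 ?sqr_ge0 //; lra.
nra.
Qed.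

Section Channel.
Variables (l : nat) (W : bool -> 'I_(l.*2.+1) -> R).
Hypothesis W_channel : is_channel W.

Let W_ge0 := W_channel.1.
Let W_sum := W_channel.2.

Lemma bhattacharyya_itv : 0 <= bhattacharyya W <= 1.
Proof.
rewrite sumr_ge0 /=; last by move=> y _; rewrite mulr_ge0 ?powR_ge0.
apply: le_trans (ler_sum _ (fun y _ => mul_le_mean_sqr _ _)) _.
under eq_bigr do rewrite !(powR_invnK (W_ge0 _ _)) //.
by rewrite -mulr_sumr big_split /= !W_sum; lra.
Qed.

Lemma third_affinity_itv : 0 <= third_affinity W <= 1.
Proof.
rewrite sumr_ge0 /=; last by move=> y _; rewrite mulr_ge0 ?exprn_ge0 ?powR_ge0.
apply: le_trans (ler_sum _ (fun y _ => sqr_mul_le_mean_cube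
                                         (powR_ge0 (W false y) _) (powR_ge0 (W true y) _))) _.
under eq_bigr do rewrite !(powR_invnK (W_ge0 _ _)) //.
by rewrite -mulr_sumr big_split /= -mulr_sumr !W_sum; lra.
Qed.

Lemma sibsonI_half : sibson_profile 2^-1 W (-1) 2 (bhattacharyya W).
Proof.
move=> P [P_ge0 P_sum]; rewrite sibsonI_invn //.
have -> : 1 - 2 = -1 :> R by lra.
rewrite invrN invr1.
congr (_ * ln _).
have expand (a b : R) : (P false * a + P true * b) ^+ 2 =
    P false ^+ 2 * a ^+ 2 + P true ^+ 2 * b ^+ 2 + 2 * (P false * P true) * (a * b).
  by ring.
under eq_bigr do rewrite expand !(powR_invnK (W_ge0 _ _)) //.
rewrite !big_split /= -!mulr_sumr !W_sum -/(bhattacharyya W).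
have -> : P true = 1 - P false by lra.
ring.
Qed.

Hypothesis W_BISO : BISO W.

Lemma sibsonI_third : sibson_profile 3^-1 W (- 2^-1) 3 (third_affinity W).
Proof.
move=> P [P_ge0 P_sum]; rewrite sibsonI_invn //.
have -> : 1 - 3 = -2 :> R by lra.
rewrite invrN.
congr (_ * ln _).
have expand (a b : R) : (P false * a + P true * b) ^+ 3 =
    P false ^+ 3 * a ^+ 3 + P true ^+ 3 * b ^+ 3
    + 3 * (P false ^+ 2 * P true) * (a ^+ 2 * b)
    + 3 * (P false * P true ^+ 2) * (b ^+ 2 * a).
  by ring.
under eq_bigr do rewrite expand !(powR_invnK (W_ge0 _ _)) //.
rewrite !big_split /= -!mulr_sumr !W_sum -/(third_affinity W).
have -> : \sum_y (W true y `^ 3^-1) ^+ 2 * W false y `^ 3^-1 = third_affinity W.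
  exact: esym (BISO_sum_swap (fun u v => (u `^ 3^-1) ^+ 2 * v `^ 3^-1) W_BISO).
have -> : P true = 1 - P false by lra.
ring.
Qed.

End Channel.

End SibsonBinaryInput.

Theorem corollary1 (R : realType) (alpha : R)
    (halpha : alpha = 3^-1 \/ alpha = 2^-1)
    (l1 l2 : nat)
    (W1 : bool -> 'I_(l1.*2.+1) -> R) (W2 : bool -> 'I_(l2.*2.+1) -> R) :
  BISO W1 -> BISO W2 ->
  alpha_capacity alpha W1 = alpha_capacity alpha W2 ->
  more_capable alpha W1 W2 /\ more_capable alpha W2 W1.
Proof.
move=> W1_BISO W2_BISO; have [W1_ch W2_ch] := (W1_BISO.1, W2_BISO.1).
case: halpha => ->.
- apply: (profile_more_capable _ _ _ (third_affinity_itv W1_ch) (third_affinity_itv W2_ch)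
            (sibsonI_third W1_ch W1_BISO) (sibsonI_third W2_ch W2_BISO)); lra.
- apply: (profile_more_capable _ _ _ (bhattacharyya_itv W1_ch) (bhattacharyya_itv W2_ch)
            (sibsonI_half W1_ch) (sibsonI_half W2_ch)); lra.
Qed.
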